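(* Let $\mathcal{M}=(\pi,x)$ be an incentive compatible and individually rational auction mechanism with a price-independent allocation policy, whose payments satisfy, for all $i$, $\mathbf{p}$, $\mathbf{c}_{-i}$, $c_i$, $$x_i(c_i,\mathbf{c}_{-i},\mathbf{p})=v_i(c_i,p_i)\pi_i(c_i,\mathbf{c}_{-i},\mathbf{p})-\lambda_i(p_i)\int_{c_i}^{\overline{c}_i}\pi_i(z,\mathbf{c}_{-i},\mathbf{p})\,dz.$$ For each $i$ let $\overline{p}_i\in\arg\max_{p'}\lambda_i(p')$. Then choosing display price $\overline{p}_i$ is a dominant strategy for advertiser $i$ (when costs are reported truthfully): for every $i$, every true cost $c_i$, every $\mathbf{c}_{-i}$, every $\mathbf{p}_{-i}$ and every $p_i'$, $u_i(c_i,(c_i,\mathbf{c}_{-i}),(\overline{p}_i,\mathbf{p}_{-i}),\mathcal{M})\ge u_i(c_i,(c_i,\mathbf{c}_{-i}),(p_i',\mathbf{p}_{-i}),\mathcal{M})$; in particular $(\overline{p}_1,\dots,\overline{p}_n)$ is an equilibrium price profile.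
   Context: There are advertisers $N=\{1,\dots,n\}$ competing for a single ad slot. Advertiser $i$ has a private product cost $c_i\in[\underline{c}_i,\overline{c}_i]$, sets a display price $p_i$, has conversion-rate function $\lambda_i:\mathbb{R}\to(0,1]$ and value $v_i(c_i,p_i)=(p_i-c_i)\lambda_i(p_i)$. An auction mechanism $\mathcal{M}=(\pi,x)$ maps cost reports and display prices $(\mathbf{c}',\mathbf{p})$ to allocations $\pi_i(\mathbf{c}',\mathbf{p})\in\{0,1\}$ (at most one winner) and payments $x_i(\mathbf{c}',\mathbf{p})$; utility $u_i(c_i,\mathbf{c}',\mathbf{p},\mathcal{M})=v_i(c_i,p_i)\pi_i(\mathbf{c}',\mathbf{p})-x_i(\mathbf{c}',\mathbf{p})$. IC: truthful cost reporting maximizes $u_i$ for all $i$, true costs, prices and others' reports. IR: truthful cost reporting yields $u_i\ge0$. The allocation policy is price-independent (PI) if $\pi_i(\mathbf{c}',\mathbf{p}^1)=\pi_i(\mathbf{c}',\mathbf{p}^2)$ for all $i$, all $\mathbf{c}'$ and all price profiles $\mathbf{p}^1,\mathbf{p}^2$. *)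

From Stdlib Require Import Reals.
From Coquelicot Require Import Coquelicot.
From mathcomp Require Import ssreflect ssrfun ssrbool eqtype ssrnat fintype.
Open Scope R_scope.

Definition profile (n : nat) := 'I_n -> R.

Definition upd {n : nat} (c : profile n) (i : 'I_n) (z : R) : profile n :=
  fun j => if j == i then z else c j.

(* allocation / payment rules : agent -> cost reports -> prices -> R *)
Definition rule (n : nat) := 'I_n -> profile n -> profile n -> R.

Definition in_costs {n : nat} (clo chi : profile n) (c : profile n) : Prop :=
  forall j, clo j <= c j <= chi j.

Definition value {n : nat} (lam : 'I_n -> R -> R) (i : 'I_n) (ci pi : R) : R :=
  (pi - ci) * lam i pi.

Definition utility {n : nat} (lam : 'I_n -> R -> R) (alloc pay : rule n)
  (i : 'I_n) (ci : R) (c' p : profile n) : R :=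
  value lam i ci (p i) * alloc i c' p - pay i c' p.

Definition valid_alloc {n : nat} (alloc : rule n) : Prop :=
  (forall i c p, alloc i c p = 0 \/ alloc i c p = 1) /\
  (forall i j c p, alloc i c p = 1 -> alloc j c p = 1 -> i = j).

Definition incentive_compatible {n : nat} (clo chi : profile n) (lam : 'I_n -> R -> R)
  (alloc pay : rule n) : Prop :=
  forall (i : 'I_n) (ci : R) (c' p : profile n),
    clo i <= ci <= chi i -> in_costs clo chi c' ->
    utility lam alloc pay i ci (upd c' i ci) p >= utility lam alloc pay i ci c' p.

Definition individually_rational {n : nat} (clo chi : profile n) (lam : 'I_n -> R -> R)
  (alloc pay : rule n) : Prop :=
  forall (i : 'I_n) (ci : R) (c' p : profile n),
    clo i <= ci <= chi i -> in_costs clo chi c' ->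
    utility lam alloc pay i ci (upd c' i ci) p >= 0.

Definition price_independent {n : nat} (alloc : rule n) : Prop :=
  forall (i : 'I_n) (c' p1 p2 : profile n), alloc i c' p1 = alloc i c' p2.

Definition payment_formula {n : nat} (clo chi : profile n) (lam : 'I_n -> R -> R)
  (alloc pay : rule n) : Prop :=
  forall (i : 'I_n) (c p : profile n), in_costs clo chi c ->
    pay i c p = value lam i (c i) (p i) * alloc i c p
                - lam i (p i) * RInt (fun z => alloc i (upd c i z) p) (c i) (chi i).

(* Under the payment rule, a truthful advertiser's utility is
   lambda_i(p_i) * \int_{c_i}^{chi_i} pi_i(z, c_{-i}, p) dz.  Price independence
   makes the integral the same for every price profile, and individual
   rationality makes it nonnegative, so the utility is a nonnegative multiple
   of lambda_i(p_i) and is maximised by a maximiser of lambda_i. *)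
From Stdlib Require Import Reals Lra FunctionalExtensionality.
From Coquelicot Require Import Coquelicot.
From mathcomp Require Import ssreflect ssrfun ssrbool eqtype ssrnat fintype.
Open Scope R_scope.

Set Implicit Arguments.

Lemma upd_id {n : nat} (c : profile n) (i : 'I_n) : upd c i (c i) = c.
Proof. by apply: functional_extensionality => j; rewrite /upd; case: eqP => // ->. Qed.

Lemma upd_eq {n : nat} (c : profile n) (i : 'I_n) (x : R) : upd c i x i = x.
Proof. by rewrite /upd eqxx. Qed.

Definition surplus {n : nat} (chi : profile n) (alloc : rule n)
  (i : 'I_n) (c p : profile n) : R :=
  RInt (fun z => alloc i (upd c i z) p) (c i) (chi i).

Section TruthfulUtility.

Variables (n : nat) (clo chi : profile n) (lam : 'I_n -> R -> R) (alloc pay : rule n).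

Lemma utility_truthfulE :
  payment_formula clo chi lam alloc pay ->
  forall i (c p : profile n), in_costs clo chi c ->
  utility lam alloc pay i (c i) c p = lam i (p i) * surplus chi alloc i c p.
Proof. by move=> Hpay i c p Hc; rewrite /utility /surplus Hpay //; ring. Qed.

Lemma surplus_price_independent :
  price_independent alloc ->
  forall i (c p q : profile n), surplus chi alloc i c p = surplus chi alloc i c q.
Proof.
move=> HPI i c p q; rewrite /surplus.
by congr RInt; apply: functional_extensionality => z; apply: HPI.
Qed.

Lemma surplus_ge0 :
  (forall i x, 0 < lam i x) ->
  individually_rational clo chi lam alloc pay ->
  payment_formula clo chi lam alloc pay ->
  forall i (c p : profile n), in_costs clo chi c -> 0 <= surplus chi alloc i c p.
Proof.
move=> Hlam HIR Hpay i c p Hc.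
have := HIR i (c i) c p (Hc i) Hc.
rewrite upd_id utility_truthfulE // => /Rge_le Hu.
apply: Rnot_lt_le => Hneg.
have : lam i (p i) * surplus chi alloc i c p < 0 by apply: Rmult_pos_neg.
lra.
Qed.

Lemma utility_truthful_le_conversion :
  (forall i x, 0 < lam i x) ->
  individually_rational clo chi lam alloc pay ->
  price_independent alloc ->
  payment_formula clo chi lam alloc pay ->
  forall i (c p q : profile n), in_costs clo chi c ->
  lam i (q i) <= lam i (p i) ->
  utility lam alloc pay i (c i) c q <= utility lam alloc pay i (c i) c p.
Proof.
move=> Hlam HIR HPI Hpay i c p q Hc Hpq.
rewrite !utility_truthfulE // (surplus_price_independent HPI i c q p).
by apply: Rmult_le_compat_r => //; apply: surplus_ge0.
Qed.

End TruthfulUtility.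

Theorem proposition2 (n : nat) (clo chi : profile n) (lam : 'I_n -> R -> R)
  (alloc pay : rule n) (pbar : profile n) :
  (forall i, clo i <= chi i) ->
  (forall i p, 0 < lam i p <= 1) ->
  valid_alloc alloc ->
  incentive_compatible clo chi lam alloc pay ->
  individually_rational clo chi lam alloc pay ->
  price_independent alloc ->
  payment_formula clo chi lam alloc pay ->
  (forall i p', lam i p' <= lam i (pbar i)) ->
  (forall (i : 'I_n) (c p : profile n) (p' : R), in_costs clo chi c ->
     utility lam alloc pay i (c i) c (upd p i (pbar i))
       >= utility lam alloc pay i (c i) c (upd p i p'))
  /\
  (forall (i : 'I_n) (c : profile n) (p' : R), in_costs clo chi c ->
     utility lam alloc pay i (c i) c pbar
       >= utility lam alloc pay i (c i) c (upd pbar i p')).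
Proof.
move=> _ Hlam01 _ _ HIR HPI Hpay Hmax.
have Hlam : forall i x, 0 < lam i x by move=> i x; case: (Hlam01 i x).
have dominant := utility_truthful_le_conversion Hlam HIR HPI Hpay.
by split=> [i c p p' Hc | i c p' Hc]; apply/Rle_ge/(dominant _ _ _ _ Hc); rewrite ?upd_eq; apply: Hmax.
Qed.
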